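(* Let $d$ be a positive square-free integer, $K=\mathbb{Q}(\sqrt{-d})$, $\mathcal{O}$ its ring of integers, $R$ the set of roots of unity in $K$, $K_1=\{z\in K: z\overline z=1\}$, and $F(d)=\min_{z\in K_1\setminus R}d(z)$. Let $\mathcal{J}$ be the set of proper nonzero ideals $\pi$ of $\mathcal{O}$ such that $\pi$ and $\overline\pi$ are coprime and $\pi^2$ is principal. Then $$F(d)=\min_{\pi\in\mathcal{J}}N_{K/\mathbb{Q}}(\pi).$$ In particular $F(1)=5$ and $F(3)=7$.
   Context: For $z\in K^*$, $\pi_z=\{a\in\mathcal{O}: az\in\mathcal{O}\}$ and $d(z)=N_{K/\mathbb{Q}}(\pi_z)=\mathrm{Card}\,\mathcal{O}/\pi_z$. $\overline{\pi}$ denotes the complex conjugate ideal. *)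

(* K = Q(sqrt(-d)) realised inside the algebraic complex numbers algC. *)
From HB Require Import structures.
From mathcomp Require Import all_boot all_order all_algebra all_field.
Set Implicit Arguments. Unset Strict Implicit. Unset Printing Implicit Defensive.
Import Order.TTheory GRing.Theory Num.Theory.
Local Open Scope ring_scope.

Definition squarefree_nat (d : nat) : Prop :=
  forall p : nat, prime p -> ~~ (p * p %| d)%N.

Definition inK (d : nat) (z : algC) : Prop :=
  exists a b : rat, z = ratr a + ratr b * sqrtC (- (d%:R)).

Definition inO (d : nat) (z : algC) : Prop := inK d z /\ z \in Aint.

Definition is_ideal (d : nat) (I : algC -> Prop) : Prop :=
  (forall x, I x -> inO d x) /\ I 0 /\
  (forall x y, I x -> I y -> I (x + y)) /\
  (forall a x, inO d a -> I x -> I (a * x)).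

Definition ideal_nonzero (I : algC -> Prop) : Prop := exists x, I x /\ x <> 0.
Definition ideal_proper (I : algC -> Prop) : Prop := ~ I 1.

Definition conj_ideal (I : algC -> Prop) : algC -> Prop := fun x => I (x^*).

Definition ideals_coprime (I J : algC -> Prop) : Prop :=
  exists a b, I a /\ J b /\ a + b = 1.

Definition ideal_mul (I J : algC -> Prop) : algC -> Prop :=
  fun x => exists s : seq (algC * algC),
    (forall p, p \in s -> I p.1 /\ J p.2) /\ x = \sum_(p <- s) p.1 * p.2.

Definition ideal_principal (d : nat) (I : algC -> Prop) : Prop :=
  exists g, inO d g /\ forall x, I x <-> exists a, inO d a /\ x = a * g.

(* Card O/I = n : a complete system of n pairwise incongruent residues *)
Definition ideal_index (d : nat) (I : algC -> Prop) (n : nat) : Prop :=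
  exists f : 'I_n -> algC,
    (forall i, inO d (f i)) /\
    (forall i j, I (f i - f j) -> i = j) /\
    (forall x, inO d x -> exists i, I (x - f i)).

Definition pi_ (d : nat) (z : algC) : algC -> Prop :=
  fun a => inO d a /\ inO d (a * z).

Definition root_of_unity (z : algC) : Prop := exists n : nat, (0 < n)%N /\ z ^+ n = 1.

Definition Dvals (d : nat) (m : nat) : Prop :=
  exists z, inK d z /\ z * z^* = 1 /\ ~ root_of_unity z /\ ideal_index d (pi_ d z) m.

Definition Jnorms (d : nat) (m : nat) : Prop :=
  exists I, is_ideal d I /\ ideal_nonzero I /\ ideal_proper I /\
    ideals_coprime I (conj_ideal I) /\ ideal_principal d (ideal_mul I I) /\
    ideal_index d I m.

Definition least_nat (P : nat -> Prop) (m : nat) : Prop :=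
  P m /\ forall k, P k -> (m <= k)%N.

(* For z in K_1 \ R let A be the denominator of the rational number z + z^*.  Then A z is
   integral, pi_z = A O + A z^* O, and a Bezout relation between A and A (z + z^* ) makes pi_z
   coprime to its conjugate with pi_z^2 = (A z^* ).  Conversely, let pi be in J with pi^2 = (g)
   and let n be the least positive integer in pi.  Norms of elements of pi are multiples of n,
   so x y^* / n is integral for x, y in pi; with pi + conj(pi) = O this gives (g g^* ) = (n^2),
   hence g g^* = n^2, z = n / g lies in K_1 \ R and pi_z = pi.  In both directions
   pi + conj(pi) = O makes every element of O congruent modulo pi to a rational integer, so
   N(pi) = n, and the sets {d(z)} and {N(pi) : pi in J} coincide.
   For d = 1, 3 the values 5 and 7 are attained at (3 + 4i) / 5 and (1 + 4 sqrt(-3)) / 7.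
   For the lower bounds, pi contains some a with a^* = 1 mod pi, so n divides N(a) and
   Tr(a) - 1 while d (4 N(a) - Tr(a)^2) is a square; congruences modulo small integers then
   force n >= 5, resp. n >= 7. *)

From mathcomp Require Import all_boot all_order all_algebra all_field.
From mathcomp Require Import ring zify.
From Stdlib Require Import Classical ClassicalEpsilon Wf_nat.
Set Implicit Arguments. Unset Strict Implicit. Unset Printing Implicit Defensive.
Import Order.TTheory GRing.Theory Num.Theory.
Local Open Scope ring_scope.

Lemma least_nat_exists (P : nat -> Prop) : (exists n, P n) -> exists m, least_nat P m.
Proof.
move=> exP; have P_dec n : P n \/ ~ P n by apply: classic.
have [m [[Pm m_min] _]] := dec_inh_nat_subset_has_unique_least_element _ P_dec exP.
by exists m; split=> // k /m_min /ssrnat.leP.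
Qed.

Lemma conj_ratr (a : rat) : (ratr a : algC)^* = ratr a.
Proof. by rewrite conj_Crat ?Crat_rat. Qed.

Lemma monic_quadratic_root_Aint (x t n : algC) :
  t \is a Num.int -> n \is a Num.int -> x ^+ 2 - t * x + n = 0 -> x \in Aint.
Proof.
move=> t_int n_int x_root; pose p := 'X * ('X - t%:P) + n%:P.
have p_int : p \is a polyOver Num.int.
  apply/polyOverP=> i; rewrite coefD coefXM coefC coefB coefX coefC.
  by case: i => [|[|[|i]]] /=; rewrite ?addr0 ?add0r ?subr0 ?sub0r ?rpredN ?rpred0 ?rpred1.
apply: (root_monic_Aint _ _ p_int).
  by rewrite /root !hornerE -x_root; apply/eqP; ring.
rewrite monicE lead_coefDl ?lead_coefM ?lead_coefX ?lead_coefXsubC ?mulr1 //.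
rewrite size_polyC size_mul ?polyX_eq0 ?polyXsubC_eq0 // size_polyX size_XsubC.
by case: (n != 0).
Qed.

Lemma Aint_trace_norm (x : algC) :
  x + x^* \is a Num.int -> x * x^* \is a Num.int -> x \in Aint.
Proof. by move=> tr_int N_int; apply: (monic_quadratic_root_Aint tr_int N_int); ring. Qed.

Lemma root_of_unity_Aint (z : algC) : root_of_unity z -> z \in Aint.
Proof. by move=> [n [n_gt0 zn1]]; apply: (Aint_unity_root n_gt0); rewrite unity_rootE zn1. Qed.

Lemma Cint_inv_pos_eq1 (x : algC) :
  x \is a Num.int -> x^-1 \is a Num.int -> 0 < x -> x = 1.
Proof.
move=> x_int xV_int x_gt0; have xV_gt0 : 0 < x^-1 by rewrite invr_gt0.
have x_ge1 : 1 <= x by rewrite -(gtr0_norm x_gt0) norm_intr_ge1 ?lt0r_neq0.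
have xV_ge1 : 1 <= x^-1 by rewrite -(gtr0_norm xV_gt0) norm_intr_ge1 ?lt0r_neq0.
by apply/eqP; rewrite eq_le x_ge1 andbT -invf_ge1.
Qed.

Lemma Cint_natr_div_dvdn (a M : nat) :
  (0 < M)%N -> (a%:R / M%:R : algC) \is a Num.int -> (M %| a)%N.
Proof.
move=> M_gt0 /intrP [q aq]; rewrite -(dvdzE M a); apply/dvdzP; exists q; apply: (@intr_inj algC).
by rewrite intrM -!pmulrn -aq divfK // pnatr_eq0 -lt0n.
Qed.

Lemma divz_eq_bounded (k : int) (m : nat) : (0 < m)%N ->
  exists v r : int, k = v * m + r /\ 0 <= r < m.
Proof.
move=> m_gt0; exists (k %/ m)%Z, (k %% m)%Z; split; first exact: divz_eq.
by rewrite modz_ge0 ?ltz_pmod // -lt0n.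
Qed.

Section ImaginaryQuadraticField.
Variable d : nat.
Hypothesis d_gt0 : (0 < d)%N.
Local Notation s := (sqrtC (- (d%:R : algC))).

Lemma sqrtNd_sq : s * s = - d%:R.
Proof. by rewrite -expr2 sqrtCK. Qed.

Lemma conj_sqrtNd : s^* = - s.
Proof.
have ss : s^* * s^* = s * s by rewrite -rmorphM sqrtNd_sq rmorphN rmorph_nat.
have : (s^* - s) * (s^* + s) = 0 by rewrite mulrDr !mulrBl ss [s * _]mulrC; ring.
move/eqP; rewrite mulf_eq0 subr_eq0 addr_eq0 => /orP [/eqP/CrealP|/eqP //].
by rewrite realEsqr expr2 sqrtNd_sq oppr_ge0 lern0; case: d d_gt0.
Qed.

Lemma inK_rat (a : rat) : inK d (ratr a).
Proof. by exists a, 0; rewrite rmorph0 mul0r addr0. Qed.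

Lemma inK_int (k : int) : inK d k%:~R.
Proof. by rewrite -(rmorph_int (ratr : rat -> algC)); apply: inK_rat. Qed.

Lemma inK_sqrtNd : inK d s.
Proof. by exists 0, 1; rewrite rmorph0 rmorph1 add0r mul1r. Qed.

Lemma inK_add x y : inK d x -> inK d y -> inK d (x + y).
Proof. by move=> [a [b ->]] [a' [b' ->]]; exists (a + a'), (b + b'); rewrite !rmorphD /=; ring. Qed.

Lemma inK_opp x : inK d x -> inK d (- x).
Proof. by move=> [a [b ->]]; exists (- a), (- b); rewrite !rmorphN /=; ring. Qed.

Lemma inK_mul x y : inK d x -> inK d y -> inK d (x * y).
Proof.
move=> [a [b ->]] [a' [b' ->]]; exists (a * a' - d%:R * b * b'), (a * b' + b * a').
move: sqrtNd_sq; set t := s => tt.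
by rewrite !(rmorphD, rmorphN, rmorphM, rmorph_nat) /= -[d%:R]opprK -tt; ring.
Qed.

Lemma conj_rat_sqrtNd (a b : rat) : (ratr a + ratr b * s)^* = ratr a - ratr b * s.
Proof. by rewrite rmorphD /= conj_ratr rmorphM /= conj_ratr conj_sqrtNd mulrN. Qed.

Lemma inK_conj x : inK d x -> inK d x^*.
Proof. by move=> [a [b ->]]; exists a, (- b); rewrite conj_rat_sqrtNd rmorphN mulNr. Qed.

Lemma inK_trace_rat x : inK d x -> x + x^* \in Crat.
Proof.
by move=> [a [b ->]]; apply/CratP; exists (a + a); rewrite conj_rat_sqrtNd rmorphD; ring.
Qed.

Lemma inK_norm_rat x : inK d x -> x * x^* \in Crat.
Proof.
move=> [a [b ->]]; apply/CratP; exists (a ^+ 2 + d%:R * b ^+ 2); rewrite conj_rat_sqrtNd.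
move: sqrtNd_sq; set t := s => tt.
by rewrite rmorphD rmorphM !rmorphXn rmorph_nat -[d%:R]opprK -tt; ring.
Qed.

Lemma inK_inv x : inK d x -> inK d x^-1.
Proof.
move=> xK; have /CratP [q Nq] := inK_norm_rat xK.
by rewrite invC_norm normCK Nq mulrC -fmorphV; apply: inK_mul (inK_conj xK) (inK_rat _).
Qed.

Lemma inO_add x y : inO d x -> inO d y -> inO d (x + y).
Proof. by move=> [? ?] [? ?]; split; [apply: inK_add | rewrite rpredD]. Qed.

Lemma inO_mul x y : inO d x -> inO d y -> inO d (x * y).
Proof. by move=> [? ?] [? ?]; split; [apply: inK_mul | rewrite rpredM]. Qed.

Lemma inO_opp x : inO d x -> inO d (- x).
Proof. by move=> [? ?]; split; [apply: inK_opp | rewrite rpredN]. Qed.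

Lemma inO_sub x y : inO d x -> inO d y -> inO d (x - y).
Proof. by move=> xO /inO_opp; apply: inO_add. Qed.

Lemma inO_conj x : inO d x -> inO d x^*.
Proof. by move=> [? ?]; split; [apply: inK_conj | rewrite (Aint_aut Num.conj)]. Qed.

Lemma inO_int (k : int) : inO d k%:~R.
Proof. by split; [apply: inK_int | apply: Aint_int]. Qed.

Lemma inO_nat (k : nat) : inO d k%:R.
Proof. exact: (inO_int k). Qed.

Lemma inO_sqrtNd : inO d s.
Proof.
split; first exact: inK_sqrtNd.
apply: (@monic_quadratic_root_Aint _ 0 d%:R); rewrite ?rpred0 ?rpred_nat //.
by rewrite mul0r subr0 expr2 sqrtNd_sq addNr.
Qed.

Lemma inO_sum (T : eqType) (r : seq T) (F : T -> algC) :
  {in r, forall i, inO d (F i)} -> inO d (\sum_(i <- r) F i).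
Proof.
by move=> FO; rewrite big_seq; apply: big_ind => //; [exact: (inO_nat 0) | exact: inO_add].
Qed.

Lemma inO_trace_int x : inO d x -> x + x^* \is a Num.int.
Proof.
by move=> [xK xA]; apply: Cint_rat_Aint (inK_trace_rat xK) _; rewrite rpredD ?(Aint_aut Num.conj).
Qed.

Lemma inO_norm_int x : inO d x -> x * x^* \is a Num.int.
Proof.
by move=> [xK xA]; apply: Cint_rat_Aint (inK_norm_rat xK) _; rewrite rpredM ?(Aint_aut Num.conj).
Qed.

Lemma inO_trace_norm x : inK d x -> x + x^* \is a Num.int -> x * x^* \is a Num.int -> inO d x.
Proof. by move=> xK tr_int N_int; split=> //; apply: Aint_trace_norm. Qed.

Lemma inO_real_int x : inO d x -> x^* = x -> x \is a Num.int.
Proof.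
move=> [xK xA] xR; apply: Cint_rat_Aint xA.
have -> : x = (x + x^*) / 2 by rewrite xR -mulr2n -(mulr_natr x 2) mulfK ?pnatr_eq0.
by rewrite rpred_div ?inK_trace_rat ?rpred_nat.
Qed.

Lemma root_of_unity_trace_int z : inK d z -> root_of_unity z -> z + z^* \is a Num.int.
Proof.
move=> zK /root_of_unity_Aint zA; apply: Cint_rat_Aint (inK_trace_rat zK) _.
by rewrite rpredD ?(Aint_aut Num.conj).
Qed.

Lemma inO_unit_root_of_unity z : inO d z -> z * z^* = 1 -> root_of_unity z.
Proof.
move=> zO zz1; have /intrP [t tr_z] := inO_trace_int zO.
have z2 : z ^+ 2 = t%:~R * z - 1 by rewrite -tr_z -zz1; ring.
have t2_le4 : (t%:~R : algC) ^+ 2 <= 4.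
  have -> : (t%:~R : algC) ^+ 2 = 4 - (z - z^*) * (z - z^*)^*.
    by rewrite -tr_z rmorphB /= conjCK -[4]mulr1 -{2}zz1; ring.
  by rewrite lerBlDr lerDl mul_conjC_ge0.
have : t = -2 \/ t = -1 \/ t = 0 \/ t = 1 \/ t = 2.
  have : t ^+ 2 <= 4 by rewrite -(ler_int algC) rmorphXn.
  lia.
(* X^2 - t X + 1 divides X^m - 1 for (t, m) = (-1, 3), (0, 4), (1, 6) *)
have divides m (q : algC) :
    (0 < m)%N -> z ^+ m - 1 = (z ^+ 2 - (t%:~R * z - 1)) * q -> root_of_unity z.
  by move=> m_gt0 zm; exists m; split=> //; apply/eqP; rewrite -subr_eq0 zm z2 subrr mul0r.
case=> [|[|[|[|]]]] t_val; rewrite t_val in z2.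
- have : (z + 1) ^+ 2 = 0 by rewrite sqrrD z2; ring.
  move/eqP; rewrite expf_eq0 /= addr_eq0 => /eqP ->.
  by exists 2%N; rewrite sqrrN expr1n.
- by apply: (divides 3%N (z - 1)) => //; rewrite t_val; ring.
- by apply: (divides 4%N (z ^+ 2 - 1)) => //; rewrite t_val; ring.
- by apply: (divides 6%N (z ^+ 4 + z ^+ 3 - z - 1)) => //; rewrite t_val; ring.
- have : (z - 1) ^+ 2 = 0 by rewrite sqrrB z2; ring.
  move/eqP; rewrite expf_eq0 /= subr_eq0 => /eqP ->.
  by exists 1%N; rewrite expr1n.
Qed.

End ImaginaryQuadraticField.

Definition ideal_min_nat (I : algC -> Prop) : nat -> Prop :=
  least_nat (fun k => (0 < k)%N /\ I k%:R).

Section Ideals.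
Variable d : nat.
Variable I : algC -> Prop.
Hypothesis I_ideal : is_ideal d I.

Lemma ideal_inO x : I x -> inO d x.
Proof. by case: I_ideal => IO _; apply: IO. Qed.

Lemma ideal0 : I 0.
Proof. by case: I_ideal => _ []. Qed.

Lemma idealD x y : I x -> I y -> I (x + y).
Proof. by case: I_ideal => _ [_ [ID _]]; apply: ID. Qed.

Lemma idealMl a x : inO d a -> I x -> I (a * x).
Proof. by case: I_ideal => _ [_ [_ IM]]; apply: IM. Qed.

Lemma idealMr a x : inO d a -> I x -> I (x * a).
Proof. by rewrite mulrC; apply: idealMl. Qed.

Lemma idealN x : I x -> I (- x).
Proof. by rewrite -mulN1r; apply: idealMl (inO_int _ (-1)). Qed.

Lemma idealB x y : I x -> I y -> I (x - y).
Proof. by move=> Ix /idealN; apply: idealD. Qed.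

Lemma ideal_sum (T : eqType) (r : seq T) (F : T -> algC) :
  {in r, forall i, I (F i)} -> I (\sum_(i <- r) F i).
Proof. by move=> FI; rewrite big_seq; apply: big_ind => //; [exact: ideal0 | exact: idealD]. Qed.

Variable n : nat.
Hypothesis n_min : ideal_min_nat I n.

Lemma ideal_min_nat_gt0 : (0 < n)%N.
Proof. by case: n_min => [[]]. Qed.

Lemma ideal_min_nat_in : I n%:R.
Proof. by case: n_min => [[]]. Qed.

Lemma ideal_int_multiple (k : int) : I ((k %/ n)%Z%:~R * n%:R).
Proof. by apply: idealMl (inO_int _ _) ideal_min_nat_in. Qed.

Lemma ideal_int_dvd (k : int) : I k%:~R -> (n %| k)%Z.
Proof.
move=> Ik; have [_ n_le] := n_min.
have : I (k %% n)%Z%:~R.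
  have -> : (k %% n)%Z = k - (k %/ n)%Z * n by lia.
  by rewrite intrB intrM -pmulrn; apply: idealB Ik (ideal_int_multiple k).
have n_gt0 : 0 < n%:Z by rewrite ltz_nat ideal_min_nat_gt0.
move=> Ir; apply/dvdz_mod0P; move: Ir (modz_ge0 k (lt0r_neq0 n_gt0)) (ltz_pmod k n_gt0).
case: (k %% n)%Z => // -[|r] // Ir _ r_lt.
by have := n_le r.+1 (conj isT Ir); move: r_lt; rewrite ltz_nat; lia.
Qed.

Lemma ideal_min_nat_inj i j : (i < n)%N -> (j < n)%N -> I (i%:R - j%:R) -> i = j.
Proof.
move=> i_lt j_lt Iij.
have /ideal_int_dvd : I (i%:Z - j%:Z)%:~R by rewrite intrB -!pmulrn.
by rewrite -eqz_mod_dvd !modz_nat !modn_small // => /eqP [].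
Qed.

Lemma ideal_index_ge m : ideal_index d I m -> (n <= m)%N.
Proof.
move=> [f [_ [_ f_onto]]].
have /choice [g gP] : forall i : 'I_n, exists j, I (i%:R - f j).
  by move=> i; apply: f_onto; apply: inO_nat.
rewrite -[n]card_ord -[m]card_ord; apply: (@leq_card _ _ g) => i j gij.
apply/val_inj/ideal_min_nat_inj; rewrite ?ltn_ord //.
by have := idealB (gP i) (gP j); rewrite gij opprB addrA subrK.
Qed.

Hypothesis d_gt0 : (0 < d)%N.

Lemma ideal_min_nat_exists : ideal_nonzero I -> exists n, ideal_min_nat I n.
Proof.
move=> [x [Ix x_neq0]]; apply: least_nat_exists.
have xO := ideal_inO Ix.
have /natrP [k Nx] : x * x^* \is a Num.nat.
  by rewrite natrEint (inO_norm_int d_gt0 xO) mul_conjC_ge0.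
exists k; split; first by rewrite -(ltr0n algC) -Nx mul_conjC_gt0; apply/eqP.
by rewrite -Nx; apply: idealMr (inO_conj d_gt0 xO) Ix.
Qed.

Hypothesis I_coprime : ideals_coprime I (conj_ideal I).

(* With a + b = 1, a in I and b^* in I, x is congruent to the integer x a^* + x^* a. *)
Lemma ideal_int_residue x : inO d x -> exists k : int, I (x - k%:~R).
Proof.
move=> xO; have [a [b [Ia [Ibc ab1]]]] := I_coprime.
have aO := ideal_inO Ia.
have /intrP [k tr] : x * a^* + x^* * a \is a Num.int.
  by have := inO_trace_int d_gt0 (inO_mul xO (inO_conj d_gt0 aO)); rewrite rmorphM /= conjCK.
exists k; rewrite -tr.
have -> : x - (x * a^* + x^* * a) = x * b^* - x^* * a.
  have ab1c : a^* + b^* = 1 by rewrite -rmorphD ab1 rmorph1.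
  by rewrite -{1}[x]mulr1 -ab1c; ring.
by apply: idealB; apply: idealMl => //; apply: inO_conj.
Qed.

Lemma ideal_index_min_nat : ideal_index d I n.
Proof.
have n_gt0 : 0 < n%:Z by rewrite ltz_nat ideal_min_nat_gt0.
have n_neq0 := lt0r_neq0 n_gt0.
exists (fun i : 'I_n => (i : nat)%:R); split; first by move=> i; apply: inO_nat.
split=> [i j Iij|x xO].
  by apply/val_inj/ideal_min_nat_inj; rewrite ?ltn_ord.
have [k Ixk] := ideal_int_residue xO.
have r_ge0 := modz_ge0 k n_neq0.
have r_lt : (`|(k %% n)%Z| < n)%N by rewrite -ltz_nat gez0_abs ?ltz_pmod.
exists (Ordinal r_lt); rewrite /= pmulrn gez0_abs //.
have -> : x - (k %% n)%Z%:~R = (x - k%:~R) + (k %/ n)%Z%:~R * n%:R.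
  have -> : (k %% n)%Z = k - (k %/ n)%Z * n by lia.
  by rewrite intrB intrM -pmulrn; ring.
exact: idealD Ixk (ideal_int_multiple k).
Qed.

End Ideals.

Lemma inO_multiple_sum d g (T : eqType) (r : seq T) (F : T -> algC) :
  {in r, forall i, exists c, inO d c /\ F i = c * g} ->
  exists c, inO d c /\ \sum_(i <- r) F i = c * g.
Proof.
move=> Fg; rewrite big_seq; apply: (big_ind (fun y => exists c, inO d c /\ y = c * g)) => //.
- by exists 0; split; [exact: (inO_nat d 0) | rewrite mul0r].
- move=> _ _ [c1 [c1O ->]] [c2 [c2O ->]].
  by exists (c1 + c2); rewrite mulrDl; split=> //; apply: inO_add.
Qed.

Section UnitCircleToIdeal.
Variable d : nat.
Hypothesis d_gt0 : (0 < d)%N.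

Lemma pi_is_ideal z : is_ideal d (pi_ d z).
Proof.
split; [by move=> x [] | split; [|split]].
- by rewrite /pi_ mul0r; split; exact: (inO_nat d 0).
- move=> x y [xO xzO] [yO yzO].
  by split; [apply: inO_add | rewrite mulrDl; apply: inO_add].
- move=> c x cO [xO xzO].
  by split; [apply: inO_mul | rewrite -mulrA; apply: inO_mul].
Qed.

Lemma pi_nat_trace_int z (k : nat) : pi_ d z k%:R -> k%:R * (z + z^*) \is a Num.int.
Proof. by move=> [_ /(inO_trace_int d_gt0)]; rewrite rmorphM /= conjC_nat mulrDr. Qed.

Variable z : algC.
Hypothesis zK : inK d z.
Hypothesis z_unit : z * z^* = 1.
Variables A p : int.
Hypothesis A_neq0 : A != 0.
Hypothesis pA_coprime : coprimez p A.
Hypothesis A_trace : A%:~R * (z + z^*) = p%:~R.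

Local Notation a := (A%:~R : algC).

Lemma eq_mod_unit_circle x y k : x - y = k * (1 - z * z^*) -> x = y.
Proof. by rewrite z_unit subrr mulr0 => /subr0_eq. Qed.

Lemma inO_Az : inO d (a * z).
Proof.
apply: inO_trace_norm; first exact: inK_mul (inK_int _ _) zK.
  by rewrite rmorphM /= rmorph_int -mulrDr A_trace rpred_int.
by rewrite rmorphM /= rmorph_int mulrACA z_unit mulr1 rpredM ?rpred_int.
Qed.

Lemma inO_Azc : inO d (a * z^*).
Proof. by have := inO_conj d_gt0 inO_Az; rewrite rmorphM /= rmorph_int. Qed.

Lemma trace_bezout : exists u v : int, u%:~R * (a * z + a * z^*) + v%:~R * a = 1.
Proof.
have [u [v uv]] := Bezoutz p A; move: pA_coprime uv; rewrite /coprimez => /eqP -> uv.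
by exists u, v; rewrite -mulrDr A_trace -!intrM -intrD uv.
Qed.

Lemma piP x :
  pi_ d z x <-> exists c1 c2, [/\ inO d c1, inO d c2 & x = c1 * a + c2 * (a * z^*)].
Proof.
have [u [v uv]] := trace_bezout; have aO : inO d a by apply: inO_int.
split=> [[xO xzO]|[c1 [c2 [c1O c2O ->]]]].
  exists (u%:~R * (x * z) + v%:~R * x), (u%:~R * x); split.
  - by apply: inO_add; apply: inO_mul => //; apply: inO_int.
  - by apply: inO_mul => //; apply: inO_int.
  - by rewrite -[LHS]mulr1 -[in LHS]uv; ring.
split; first exact: inO_add (inO_mul c1O aO) (inO_mul c2O inO_Azc).
have -> : (c1 * a + c2 * (a * z^*)) * z = c1 * (a * z) + c2 * a * (z * z^*) by ring.
by rewrite z_unit mulr1; apply: inO_add (inO_mul c1O inO_Az) (inO_mul c2O aO).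
Qed.

Lemma pi_A : pi_ d z a.
Proof.
apply/piP; exists 1, 0; split; [exact: (inO_nat d 1) | exact: (inO_nat d 0) | ring].
Qed.

Lemma pi_mul_Azc c : inO d c -> pi_ d z (c * (a * z^*)).
Proof. by move=> cO; apply/piP; exists 0, c; split=> //; [exact: (inO_nat d 0) | ring]. Qed.

Lemma pi_nonzero : ideal_nonzero (pi_ d z).
Proof. by exists a; split; [exact: pi_A | apply/eqP; rewrite intr_eq0]. Qed.

Lemma pi_proper : ~ root_of_unity z -> ideal_proper (pi_ d z).
Proof. by move=> zNRU [_]; rewrite mul1r => zO; apply/zNRU/(inO_unit_root_of_unity d_gt0). Qed.

Lemma pi_coprime_conj : ideals_coprime (pi_ d z) (conj_ideal (pi_ d z)).
Proof.
have [u [v uv]] := trace_bezout.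
exists (v%:~R * a + u%:~R * (a * z^*)), (u%:~R * (a * z)).
split; [|split]; last by rewrite -[in RHS]uv; ring.
  by apply/piP; exists v%:~R, u%:~R; split=> //; apply: inO_int.
by rewrite /conj_ideal !rmorphM /= !rmorph_int; apply: pi_mul_Azc; apply: inO_int.
Qed.

Lemma pi_sq_principal : ideal_principal d (ideal_mul (pi_ d z) (pi_ d z)).
Proof.
have [u [v uv]] := trace_bezout.
have aO : inO d a by apply: inO_int.
exists (a * z^*); split=> [|x]; first exact: inO_Azc.
split=> [[r [r_pi ->]]|[c [cO ->]]].
  apply: inO_multiple_sum => -[x1 x2] /r_pi /= [].
  move=> /piP [c1 [c2 [c1O c2O ->]]] /piP [e1 [e2 [e1O e2O ->]]].
  exists (c1 * e1 * (a * z) + (c1 * e2 + c2 * e1) * a + c2 * e2 * (a * z^*)); split.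
    by repeat first [assumption | exact: inO_Az | exact: inO_Azc | apply: inO_add | apply: inO_mul].
  by apply: (eq_mod_unit_circle (k := c1 * e1 * a * a)); ring.
exists [:: (c * v%:~R * (a * z^*), a); (c * u%:~R * a, a); (c * u%:~R * (a * z^*), a * z^*)].
split; last first.
  transitivity (c * (a * z^*) * (u%:~R * (a * z + a * z^*) + v%:~R * a)); first by rewrite uv mulr1.
  rewrite !big_cons big_nil /=.
  by apply: (eq_mod_unit_circle (k := - c * u%:~R * a * a)); ring.
have cuO : inO d (c * u%:~R) by apply: inO_mul cO (inO_int _ _).
have cvO : inO d (c * v%:~R) by apply: inO_mul cO (inO_int _ _).
have piAzc : pi_ d z (a * z^*) by rewrite -[X in pi_ _ _ X]mul1r; apply: pi_mul_Azc (inO_nat d 1).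
have cuA : pi_ d z (c * u%:~R * a) by apply: (idealMl (pi_is_ideal z) cuO pi_A).
move=> [y1 y2]; rewrite !inE => /or3P [] /eqP [-> ->] /=.
- by split; [apply: pi_mul_Azc | apply: pi_A].
- by split; [|apply: pi_A].
- by split; [apply: pi_mul_Azc |].
Qed.

End UnitCircleToIdeal.

Section IdealToUnitCircle.
Variable d : nat.
Hypothesis d_gt0 : (0 < d)%N.
Variable I : algC -> Prop.
Hypothesis I_ideal : is_ideal d I.
Hypothesis I_coprime : ideals_coprime I (conj_ideal I).
Variable n : nat.
Hypothesis n_min : ideal_min_nat I n.
Variable g : algC.
Hypothesis gO : inO d g.
Hypothesis g_gen : forall x, ideal_mul I I x <-> exists c, inO d c /\ x = c * g.

Local Notation nR := (n%:R : algC).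

Lemma nR_neq0 : nR != 0.
Proof. by rewrite pnatr_eq0 -lt0n (ideal_min_nat_gt0 n_min). Qed.

Lemma ideal_norm_multiple x : I x -> exists q : int, x * x^* = q%:~R * nR.
Proof.
move=> Ix; have xO := ideal_inO I_ideal Ix.
have /intrP [k Nx] := inO_norm_int d_gt0 xO.
have /(ideal_int_dvd I_ideal n_min)/dvdzP [q kq] : I k%:~R.
  by rewrite -Nx; apply: (idealMr I_ideal (inO_conj d_gt0 xO) Ix).
by exists q; rewrite Nx kq intrM -pmulrn.
Qed.

(* The trace and norm of x y^* / n are (N(x + y) - N(x) - N(y)) / n and N(x) N(y) / n^2. *)
Lemma ideal_mul_conj_div_n x y : I x -> I y -> inO d (x * y^* / nR).
Proof.
move=> Ix Iy; have [xO yO] := (ideal_inO I_ideal Ix, ideal_inO I_ideal Iy).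
have [q1 Nx] := ideal_norm_multiple Ix; have [q2 Ny] := ideal_norm_multiple Iy.
have [q3 Nxy] := ideal_norm_multiple (idealD I_ideal Ix Iy).
have n0 := nR_neq0.
apply: inO_trace_norm.
- apply: inK_mul; first by apply: inK_mul; [case: xO | case: (inO_conj d_gt0 yO)].
  exact: (inK_inv d_gt0 (inK_int d n)).
- suff -> : x * y^* / nR + (x * y^* / nR)^* = (q3 - q1 - q2)%:~R by apply: rpred_int.
  apply: (mulIf n0); rewrite !intrB !mulrBl -Nx -Ny -Nxy !(rmorphM, rmorphD, fmorphV) /=.
  by rewrite conjCK conjC_nat mulrDl !divfK //; ring.
- suff -> : x * y^* / nR * (x * y^* / nR)^* = (q1 * q2)%:~R by apply: rpred_int.
  apply: (mulIf n0); apply: (mulIf n0); rewrite intrM !(rmorphM, fmorphV) /= conjCK conjC_nat.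
  transitivity ((x * x^*) * (y * y^*) * (nR / nR) * (nR / nR)); first ring.
  by rewrite divff // !mulr1 Nx Ny; ring.
Qed.

Lemma ideal_mul_gen u v : I u -> I v -> exists c, inO d c /\ u * v = c * g.
Proof.
move=> Iu Iv; apply/g_gen; exists [:: (u, v)]; split; last by rewrite big_seq1.
by move=> p; rewrite inE => /eqP ->.
Qed.

Lemma ideal_conj_mul_gen u v : I u^* -> I v^* -> exists c, inO d c /\ u * v = c * g^*.
Proof.
move=> Iu Iv; have [c [cO uv]] := ideal_mul_gen Iu Iv.
by exists c^*; split; [apply: inO_conj | rewrite -[u]conjCK -[v]conjCK -rmorphM uv rmorphM].
Qed.

Lemma gen_sum_of_products :
  exists r : seq (algC * algC),
    (forall p, p \in r -> I p.1 /\ I p.2) /\ g = \sum_(p <- r) p.1 * p.2.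
Proof. by apply/g_gen; exists 1; split; [exact: (inO_nat d 1) | rewrite mul1r]. Qed.

Lemma gen_neq0 : g != 0.
Proof.
have In := ideal_min_nat_in n_min; have [c [_ nn]] := ideal_mul_gen In In.
by apply: contra_neq nR_neq0 => g0; apply/eqP; rewrite -[_ == 0]orbb -mulf_eq0 nn g0 mulr0.
Qed.

(* With a and b^* in I, n^2 = n^2 (a + b)^2 lies in (g g^* ) because n = n^* lies in I and in
   its conjugate. *)
Lemma inO_nsq_div_gen_norm : inO d (nR * nR / (g * g^*)).
Proof.
have [a [b [Ia [Ibc ab1]]]] := I_coprime.
have In := ideal_min_nat_in n_min.
have Inc : I nR^* by rewrite conjC_nat.
have [c1 [c1O e1]] := ideal_mul_gen Ia Ia.
have [c2 [c2O e2]] := ideal_conj_mul_gen Inc Inc.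
have [c3 [c3O e3]] := ideal_mul_gen Ia In.
have [c4 [c4O e4]] := ideal_conj_mul_gen Ibc Inc.
have [c5 [c5O e5]] := ideal_mul_gen In In.
have [c6 [c6O e6]] := ideal_conj_mul_gen Ibc Ibc.
suff -> : nR * nR / (g * g^*) = c1 * c2 + 2%:R * c3 * c4 + c5 * c6.
  by repeat first [assumption | exact: (inO_nat d 2) | apply: inO_add | apply: inO_mul].
have gg0 : g * g^* != 0 by rewrite mul_conjC_eq0 gen_neq0.
apply: (mulIf gg0); rewrite divfK //.
transitivity (nR * nR * ((a + b) * (a + b))); first by rewrite ab1 !mulr1.
transitivity (c1 * g * (c2 * g^*) + 2%:R * (c3 * g) * (c4 * g^*) + c5 * g * (c6 * g^*)); last ring.
by rewrite -e1 -e2 -e3 -e4 -e5 -e6; ring.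
Qed.

Lemma inO_gen_norm_div_nsq : inO d (g * g^* / (nR * nR)).
Proof.
have [r [r_I g_sum]] := gen_sum_of_products; have n0 := nR_neq0.
have -> : g * g^* / (nR * nR) =
    \sum_(p <- r) \sum_(q <- r) (p.1 * q.1^* / nR) * (p.2 * q.2^* / nR).
  rewrite g_sum rmorph_sum big_distrl /= mulr_suml; apply: eq_bigr => p _.
  rewrite big_distrr /= mulr_suml; apply: eq_bigr => q _; rewrite rmorphM /=.
  by apply: (mulIf n0); apply: (mulIf n0); field.
apply: inO_sum => p /r_I [Ip1 Ip2]; apply: inO_sum => q /r_I [Iq1 Iq2].
by apply: inO_mul; apply: ideal_mul_conj_div_n.
Qed.

Lemma gen_norm : g * g^* = nR * nR.
Proof.
have nn0 : nR * nR != 0 by rewrite mulf_neq0 // nR_neq0.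
pose r := g * g^* / (nR * nR).
have r_real : r^* = r by rewrite !(rmorphM, fmorphV) /= conjCK rmorph_nat [g^* * _]mulrC.
have r_int : r \is a Num.int := inO_real_int d_gt0 inO_gen_norm_div_nsq r_real.
have rV_int : r^-1 \is a Num.int.
  apply: (inO_real_int d_gt0); last by rewrite fmorphV /= r_real.
  by rewrite invf_div; apply: inO_nsq_div_gen_norm.
have r_gt0 : 0 < r.
  by rewrite divr_gt0 ?mul_conjC_gt0 ?gen_neq0 // mulr_gt0 // ltr0n (ideal_min_nat_gt0 n_min).
by rewrite -[g * g^*](divfK nn0) -/r (Cint_inv_pos_eq1 r_int rV_int r_gt0) mul1r.
Qed.

Lemma gen_quotient_inK : inK d (nR / g).
Proof. by apply: inK_mul (inK_int d n) (inK_inv d_gt0 _); case: gO. Qed.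

Lemma gen_quotient_unit : (nR / g) * (nR / g)^* = 1.
Proof.
have gc0 : g^* != 0 by rewrite conjC_eq0 gen_neq0.
rewrite rmorphM fmorphV /= rmorph_nat.
transitivity (nR * nR / (g * g^*)); first by rewrite invfM; ring.
by rewrite gen_norm divff // mulf_neq0 ?nR_neq0.
Qed.

Lemma pi_gen_quotient x : pi_ d (nR / g) x <-> I x.
Proof.
have n0 := nR_neq0; have g0 := gen_neq0.
split=> [[xO xzO]|Ix].
  have [a [b [Ia [Ibc ab1]]]] := I_coprime.
  have [r [r_I g_sum]] := gen_sum_of_products.
  have Igb : I (g * b / nR).
    rewrite g_sum !big_distrl /=; apply: (ideal_sum I_ideal) => p /r_I [Ip1 Ip2].
    have -> : p.1 * p.2 * b / nR = p.1 * (p.2 * b^* ^* / nR) by rewrite conjCK; ring.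
    exact: (idealMr I_ideal (ideal_mul_conj_div_n Ip2 Ibc) Ip1).
  have -> : x = x * a + x * (nR / g) * (g * b / nR).
    transitivity (x * (a + b)); first by rewrite ab1 mulr1.
    by field; rewrite n0 g0.
  exact: (idealD I_ideal (idealMl I_ideal xO Ia) (idealMl I_ideal xzO Igb)).
split; first exact: (ideal_inO I_ideal Ix).
have [c [cO xn]] := ideal_mul_gen Ix (ideal_min_nat_in n_min).
by rewrite mulrA xn mulfK.
Qed.

Lemma Dvals_ideal_index m : ideal_proper I -> ideal_index d I m -> Dvals d m.
Proof.
move=> I_proper [f [fO [f_inj f_onto]]].
exists (nR / g); split; first exact: gen_quotient_inK.
split; first exact: gen_quotient_unit.
split.
  move=> /root_of_unity_Aint zA; apply/I_proper/pi_gen_quotient.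
  by split; [exact: (inO_nat d 1) | rewrite mul1r; split=> //; exact: gen_quotient_inK].
exists f; split=> //; split=> [i j /pi_gen_quotient|x /f_onto [i /pi_gen_quotient]].
  exact: f_inj.
by exists i.
Qed.

End IdealToUnitCircle.

Lemma Jnorms_Dvals d m : (0 < d)%N -> Jnorms d m -> Dvals d m.
Proof.
move=> d_gt0 [I [I_ideal [I_nz [I_proper [I_coprime [[g [gO g_gen]] I_index]]]]]].
have [n n_min] := ideal_min_nat_exists I_ideal d_gt0 I_nz.
exact: (Dvals_ideal_index d_gt0 I_ideal I_coprime n_min gO g_gen I_proper I_index).
Qed.

Section UnitCircleElement.
Variables (d : nat) (z : algC).
Hypotheses (d_gt0 : (0 < d)%N) (zK : inK d z) (z_unit : z * z^* = 1).
Hypothesis zNRU : ~ root_of_unity z.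

Lemma pi_in_J :
  [/\ is_ideal d (pi_ d z), ideal_nonzero (pi_ d z), ideal_proper (pi_ d z),
       ideals_coprime (pi_ d z) (conj_ideal (pi_ d z))
     & ideal_principal d (ideal_mul (pi_ d z) (pi_ d z))].
Proof.
have /CratP [q tr_q] := inK_trace_rat d_gt0 zK.
have A_trace : (denq q)%:~R * (z + z^*) = (numq q)%:~R.
  by rewrite tr_q mulrC divfK // intr_eq0 denq_neq0.
have pA_coprime := coprime_num_den q.
split; first exact: pi_is_ideal.
- exact: (pi_nonzero d_gt0 zK z_unit (denq_neq0 q) pA_coprime A_trace).
- exact: (pi_proper d_gt0 z_unit).
- exact: (pi_coprime_conj d_gt0 zK z_unit pA_coprime A_trace).
- exact: (pi_sq_principal d_gt0 zK z_unit pA_coprime A_trace).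
Qed.

Lemma Dvals_ideal_min_nat n : ideal_min_nat (pi_ d z) n -> Dvals d n.
Proof.
have [pi_ideal _ _ pi_coprime _] := pi_in_J.
move=> n_min; exists z; do 3!split=> //.
exact: (ideal_index_min_nat pi_ideal n_min d_gt0 pi_coprime).
Qed.

Lemma Dvals_exists : exists n, Dvals d n.
Proof.
have [pi_ideal pi_nz _ _ _] := pi_in_J.
have [n n_min] := ideal_min_nat_exists pi_ideal d_gt0 pi_nz.
by exists n; apply: Dvals_ideal_min_nat.
Qed.

End UnitCircleElement.

Lemma Dvals_Jnorms d m : (0 < d)%N -> Dvals d m -> Jnorms d m.
Proof.
move=> d_gt0 [z [zK [z_unit [zNRU z_index]]]].
have [pi_ideal pi_nz pi_proper pi_coprime pi_principal] := pi_in_J d_gt0 zK z_unit zNRU.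
by exists (pi_ d z).
Qed.

Section UnitCirclePoint.
Variable d : nat.
Hypothesis d_gt0 : (0 < d)%N.
Local Notation s := (sqrtC (- (d%:R : algC))).
Variables c e M : nat.
Hypothesis M_gt0 : (0 < M)%N.
Hypothesis cdeM : (c ^ 2 + d * e ^ 2 = M ^ 2)%N.
Local Notation z := ((c%:R + e%:R * s) / M%:R).

Let M_neq0 : (M%:R : algC) != 0.
Proof. by rewrite pnatr_eq0 -lt0n. Qed.

Lemma point_inK : inK d z.
Proof.
apply: inK_mul (inK_inv d_gt0 (inK_int d M)).
exact: inK_add (inK_int d c) (inK_mul (inK_int d e) (inK_sqrtNd d)).
Qed.

Lemma point_conj : z^* = (c%:R - e%:R * s) / M%:R.
Proof. by rewrite !(rmorphM, rmorphD, fmorphV) /= !rmorph_nat (conj_sqrtNd d_gt0) mulrN. Qed.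

Lemma point_unit : z * z^* = 1.
Proof.
have cdeM' : (c%:R : algC) ^+ 2 + d%:R * e%:R ^+ 2 = M%:R ^+ 2.
  by rewrite -!natrX -natrM -natrD cdeM.
rewrite point_conj; apply: (mulIf M_neq0); apply: (mulIf M_neq0).
rewrite mul1r -expr2 -cdeM'; move: (sqrtNd_sq d); set r := s => rr.
by rewrite -[d%:R]opprK -rr; field.
Qed.

Lemma point_trace : z + z^* = (2 * c)%:R / M%:R.
Proof. by rewrite point_conj natrM; field. Qed.

Lemma pi_point_M : pi_ d z M%:R.
Proof.
split; first exact: inO_nat.
rewrite mulrC divfK //.
exact: inO_add (inO_nat d c) (inO_mul (inO_nat d e) (inO_sqrtNd d)).
Qed.

Lemma pi_point_dvd k : pi_ d z k%:R -> (M %| k * (2 * c))%N.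
Proof.
move/(pi_nat_trace_int d_gt0); rewrite point_trace mulrA -natrM.
exact: Cint_natr_div_dvdn.
Qed.

Lemma point_root_of_unity : root_of_unity z -> (M %| 2 * c)%N.
Proof.
by move/(root_of_unity_trace_int d_gt0 point_inK); rewrite point_trace; apply: Cint_natr_div_dvdn.
Qed.

Lemma Dvals_point :
  (1 < M)%N -> (forall k, (0 < k < M)%N -> ~~ (M %| k * (2 * c))%N) -> Dvals d M.
Proof.
move=> M_gt1 M_ndvd.
have zNRU : ~ root_of_unity z.
  by move/point_root_of_unity; apply/negP; rewrite -[(2 * c)%N]mul1n; apply: M_ndvd; rewrite M_gt1.
apply: (Dvals_ideal_min_nat d_gt0 point_inK point_unit zNRU).
split=> [|k [k_gt0 /pi_point_dvd]]; first by split=> //; apply: pi_point_M.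
by rewrite leqNgt; apply: contraL => k_lt; apply: M_ndvd; rewrite k_gt0.
Qed.

Lemma Dvals_exists_point : ~~ (M %| 2 * c)%N -> exists m, Dvals d m.
Proof.
move=> M_ndvd; apply: (Dvals_exists d_gt0 point_inK point_unit) => /point_root_of_unity.
exact/negP.
Qed.

End UnitCirclePoint.

(* The point (|4 - d| + 4 sqrt(-d)) / (4 + d), written with the truncated-subtraction identity
   |4 - d| = (4 - d) + (d - 4); it is a root of unity only when 4 + d divides 2 |4 - d|, that is
   for d = 4 or 12, which are not square-free. *)
Lemma Dvals_exists_squarefree d : (0 < d)%N -> squarefree_nat d -> exists m, Dvals d m.
Proof.
move=> d_gt0 d_sqf.
apply: (@Dvals_exists_point d d_gt0 ((4 - d) + (d - 4)) 4 (4 + d)) => //; first nia.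
apply/negP => /dvdnP [j ej].
have : d = 4%N \/ d = 12%N by case: j ej => [|[|j]] ej; nia.
by case=> d_val; have := d_sqf 2%N isT; rewrite d_val.
Qed.

Section LowerBound.
Variable d : nat.
Hypothesis d_gt0 : (0 < d)%N.
Local Notation s := (sqrtC (- (d%:R : algC))).

(* (a - a^* ) sqrt(-d) is a real element of O, hence an integer. *)
Lemma inO_disc_square a t N : inO d a -> a + a^* = t%:~R -> a * a^* = N%:~R ->
  exists k : int, k ^+ 2 = d%:Z * (4 * N - t ^+ 2).
Proof.
move=> aO tr nm.
have kO := inO_mul (inO_sub aO (inO_conj d_gt0 aO)) (inO_sqrtNd d).
have /intrP [k kE] : (a - a^*) * s \is a Num.int.
  by apply: (inO_real_int d_gt0 kO); rewrite rmorphM rmorphB /= conjCK conj_sqrtNd //; ring.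
exists k; apply: (@intr_inj algC).
rewrite rmorphXn /= -kE intrM intrB intrM rmorphXn /= -tr -nm -pmulrn.
move: (sqrtNd_sq d); set r := s => rr.
by rewrite -[d%:R]opprK -rr; ring.
Qed.

Lemma Jnorm_trace_norm_congr m : Jnorms d m ->
  exists (n : nat) (t N k : int), [/\ (2 <= n <= m)%N, (n %| N)%Z, (n %| t - 1)%Z &
    k ^+ 2 = d%:Z * (4 * N - t ^+ 2)].
Proof.
move=> [I [I_ideal [I_nz [I_proper [I_coprime [_ I_index]]]]]].
have [n n_min] := ideal_min_nat_exists I_ideal d_gt0 I_nz.
have [a [b [Ia [Ibc ab1]]]] := I_coprime.
have aO := ideal_inO I_ideal Ia.
have /intrP [t tr] := inO_trace_int d_gt0 aO.
have /intrP [N nm] := inO_norm_int d_gt0 aO.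
have [k disc] := inO_disc_square aO tr nm.
exists n, t, N, k; split=> //.
- rewrite (ideal_index_ge I_ideal n_min I_index) andbT.
  move: (ideal_min_nat_gt0 n_min) (ideal_min_nat_in n_min).
  by case: n {n_min} => [|[|n]] // _ /I_proper.
- apply: (ideal_int_dvd I_ideal n_min); rewrite -nm.
  exact: (idealMr I_ideal (inO_conj d_gt0 aO) Ia).
- apply: (ideal_int_dvd I_ideal n_min).
  have ab1c : a^* + b^* = 1 by rewrite -rmorphD ab1 rmorph1.
  have -> : ((t - 1)%:~R : algC) = a - b^* by rewrite intrB -tr -ab1c; ring.
  exact: (idealB I_ideal Ia Ibc).
Qed.

End LowerBound.

Lemma gauss_trace_norm_mod_small (t k N n : int) :
  t ^+ 2 + k ^+ 2 = 4 * N -> (n %| N)%Z -> (n %| t - 1)%Z -> 2 <= n <= 4 -> False.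
Proof.
move=> E /dvdzP [qN Nq] /dvdzP [qt tq] n_bnd; have {}tq : t = qt * n + 1 by lia.
have [n2|[n3|n4]] : n = 2 \/ n = 3 \/ n = 4 by lia.
- have [v [r [kv r_bnd]]] := divz_eq_bounded k (isT : (0 < 2)%N).
  have : r = 0 \/ r = 1 by lia.
  by case=> r_val; subst; rewrite !expr2 in E; lia.
- have [v [r [kv r_bnd]]] := divz_eq_bounded k (isT : (0 < 3)%N).
  have : r = 0 \/ r = 1 \/ r = 2 by lia.
  by case=> [|[]] r_val; subst; rewrite !expr2 in E; lia.
- have [v [r [kv r_bnd]]] := divz_eq_bounded k (isT : (0 < 2)%N).
  have : r = 0 \/ r = 1 by lia.
  by case=> r_val; subst; rewrite !expr2 in E; lia.
Qed.

Lemma eisenstein_trace_norm_mod_small (t k N n : int) :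
  3 * t ^+ 2 + k ^+ 2 = 12 * N -> (n %| N)%Z -> (n %| t - 1)%Z -> 2 <= n <= 6 -> False.
Proof.
move=> E /dvdzP [qN Nq] /dvdzP [qt tq] n_bnd; have {}tq : t = qt * n + 1 by lia.
have : n = 2 \/ n = 3 \/ n = 4 \/ n = 5 \/ n = 6 by lia.
case=> [|[|[|[|]]]] n_val.
- have [v [r [kv r_bnd]]] := divz_eq_bounded k (isT : (0 < 4)%N).
  have [w [s [qtw s_bnd]]] := divz_eq_bounded qt (isT : (0 < 2)%N).
  have : s = 0 \/ s = 1 by lia.
  have : r = 0 \/ r = 1 \/ r = 2 \/ r = 3 by lia.
  by case=> [|[|[]]] r_val [] s_val; subst; rewrite !expr2 in E; lia.
- have [v [r [kv r_bnd]]] := divz_eq_bounded k (isT : (0 < 3)%N).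
  have : r = 0 \/ r = 1 \/ r = 2 by lia.
  by case=> [|[]] r_val; subst; rewrite !expr2 in E; lia.
- have [v [r [kv r_bnd]]] := divz_eq_bounded k (isT : (0 < 4)%N).
  have : r = 0 \/ r = 1 \/ r = 2 \/ r = 3 by lia.
  by case=> [|[|[]]] r_val; subst; rewrite !expr2 in E; lia.
- have [v [r [kv r_bnd]]] := divz_eq_bounded k (isT : (0 < 5)%N).
  have : r = 0 \/ r = 1 \/ r = 2 \/ r = 3 \/ r = 4 by lia.
  by case=> [|[|[|[]]]] r_val; subst; rewrite !expr2 in E; lia.
- have [v [r [kv r_bnd]]] := divz_eq_bounded k (isT : (0 < 4)%N).
  have [w [s [qtw s_bnd]]] := divz_eq_bounded qt (isT : (0 < 2)%N).
  have : s = 0 \/ s = 1 by lia.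
  have : r = 0 \/ r = 1 \/ r = 2 \/ r = 3 by lia.
  by case=> [|[|[]]] r_val [] s_val; subst; rewrite !expr2 in E; lia.
Qed.

Lemma Jnorms1_ge5 m : Jnorms 1 m -> (5 <= m)%N.
Proof.
move=> /(Jnorm_trace_norm_congr (isT : (0 < 1)%N)) [n [t [N [k [n_bnd nN nt disc]]]]].
rewrite leqNgt; apply/negP => m_lt5.
apply: (gauss_trace_norm_mod_small (k := k) _ nN nt); first lia.
by rewrite !lez_nat; lia.
Qed.

Lemma Jnorms3_ge7 m : Jnorms 3 m -> (7 <= m)%N.
Proof.
move=> /(Jnorm_trace_norm_congr (isT : (0 < 3)%N)) [n [t [N [k [n_bnd nN nt disc]]]]].
rewrite leqNgt; apply/negP => m_lt7.
apply: (eisenstein_trace_norm_mod_small (k := k) _ nN nt); first lia.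
by rewrite !lez_nat; lia.
Qed.

Theorem lemma28 (d : nat) (hd : (0 < d)%N) (hsf : squarefree_nat d) :
  exists m : nat, least_nat (Dvals d) m /\ least_nat (Jnorms d) m /\
    (d = 1%N -> m = 5%N) /\ (d = 3%N -> m = 7%N).
Proof.
have [m [Dm m_min]] := least_nat_exists (Dvals_exists_squarefree hd hsf).
have [Jm Jm_min] : least_nat (Jnorms d) m.
  by split=> [|k /(Jnorms_Dvals hd) /m_min]; first exact: Dvals_Jnorms.
exists m; do 2!split=> //; split=> d_val; subst d; apply/eqP; rewrite eqn_leq.
- rewrite Jnorms1_ge5 // andbT; apply: m_min.
  by apply: (@Dvals_point 1 isT 3 4 5) => // -[|[|[|[|[|k]]]]].
- rewrite Jnorms3_ge7 // andbT; apply: m_min.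
  by apply: (@Dvals_point 3 isT 1 4 7) => // -[|[|[|[|[|[|[|k]]]]]]].
Qed.
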